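(* Let $n\ge k\ge d$ be positive integers. Then every function $f:\{-1,1\}^n\to\mathbb{R}$ of degree at most $k$ satisfies $$\max\Big\{ \big\| \widehat{\mathrm{Rad}_{\leq d}(f)} \big\|_{\ell_2^{m}},\ \sigma(k,d)^{-1} \big\| \widehat{\mathrm{Rad}_{\leq d}(f)} \big\|_{\ell_{\frac{2d}{d+1}}^{m}} \Big\} \leq \inf_{g\in\mathscr{P}_{>d}^n\cap\mathscr{P}_{\leq k}^n} \|f-g\|_\infty,$$ where $m=\binom n0+\cdots+\binom nd$, $\widehat{\mathrm{Rad}_{\le d}(f)}=(\widehat f(S))_{|S|\le d}\in\mathbb{R}^m$, and $\sigma(k,d)=\mathsf{B}_d\sum_{\ell=0}^d|\tilde c(k,\ell)|$.
   Context: Every $f:\{-1,1\}^n\to\mathbb{R}$ has a unique expansion $f=\sum_S\widehat f(S)w_S$ with $w_S(x)=\prod_{i\in S}x_i$; $f$ has degree at most $k$ if $\widehat f(S)=0$ for $|S|>k$. $\mathscr{P}^n_{>d}=\{g:\widehat g(S)=0\text{ for }|S|\le d\}$, $\mathscr{P}^n_{\le k}=\{g:\widehat g(S)=0\text{ for }|S|>k\}$. $\mathrm{Rad}_{\le d}f=\sum_{|S|\le d}\widehat f(S)w_S$. $\|\cdot\|_\infty$ is the sup norm on $\{-1,1\}^n$. $\mathsf{B}_d$ is the least constant such that for every $n\ge d$, every $h:\{-1,1\}^n\to\mathbb{R}$ of degree at most $d$ satisfies $\big(\sum_{S}|\widehat h(S)|^{\frac{2d}{d+1}}\big)^{\frac{d+1}{2d}}\le\mathsf{B}_d\|h\|_\infty$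 (this constant is known to be finite: discrete Bohnenblust–Hille inequality). Let $T_k(x)=\sum_{\ell=0}^k c(k,\ell)x^\ell$ be the $k$-th Chebyshev polynomial of the first kind, $T_k(\cos\theta)=\cos(k\theta)$; define $\tilde c(k,\ell)=c(k,\ell)$ if $k-\ell$ is even and $\tilde c(k,\ell)=c(k-1,\ell)$ if $k-\ell$ is odd. *)

From HB Require Import structures.
From mathcomp Require Import all_boot all_order all_algebra.
From mathcomp Require Import all_classical all_reals all_analysis.
Set Implicit Arguments. Unset Strict Implicit. Unset Printing Implicit Defensive.
Import Order.TTheory GRing.Theory Num.Theory.
Local Open Scope classical_set_scope.
Local Open Scope ring_scope.

(* The Boolean cube {-1,1}^n: a point is x : {ffun 'I_n -> bool},
   whose i-th coordinate is x_i = -1 if x i = true and x_i = 1 otherwise. *)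
Definition cube (n : nat) := {ffun 'I_n -> bool}.

Definition coord {R : realType} {n : nat} (x : cube n) (i : 'I_n) : R :=
  if x i then -1 else 1.

Definition walsh {R : realType} {n : nat} (S : {set 'I_n}) (x : cube n) : R :=
  \prod_(i in S) coord x i.

(* Fourier--Walsh coefficient: the unique coefficients of the expansion
   f = sum_S fhat(S) w_S, given by fhat(S) = 2^{-n} sum_x f(x) w_S(x). *)
Definition fhat {R : realType} {n : nat} (f : cube n -> R) (S : {set 'I_n}) : R :=
  (2 ^+ n)^-1 * \sum_(x : cube n) f x * walsh S x.

Definition deg_le {R : realType} {n : nat} (f : cube n -> R) (k : nat) : Prop :=
  forall S : {set 'I_n}, (k < #|S|)%N -> fhat f S = 0.

Definition high_deg {R : realType} {n : nat} (g : cube n -> R) (d : nat) : Prop :=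
  forall S : {set 'I_n}, (#|S| <= d)%N -> fhat g S = 0.

Definition supnorm {R : realType} {n : nat} (f : cube n -> R) : R :=
  \big[Num.max/0]_(x : cube n) `|f x|.

Definition lp_low {R : realType} {n : nat} (p : R) (f : cube n -> R) (d : nat) : R :=
  (\sum_(S : {set 'I_n} | (#|S| <= d)%N) `|fhat f S| `^ p) `^ (p^-1).

Definition l2_low {R : realType} {n : nat} (f : cube n -> R) (d : nat) : R :=
  Num.sqrt (\sum_(S : {set 'I_n} | (#|S| <= d)%N) fhat f S ^+ 2).

Definition bh_exp {R : realType} (d : nat) : R := (2 * d)%:R / (d.+1)%:R.

Definition BH_consts (R : realType) (d : nat) : set R :=
  [set B | forall (n : nat), (d <= n)%N -> forall h : cube n -> R, deg_le h d ->
      lp_low (bh_exp d) h d <= B * supnorm h].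

Definition BH (R : realType) (d : nat) : R := inf (@BH_consts R d).

(* Chebyshev polynomials of the first kind (standard three-term recurrence,
   equivalently T_k(cos t) = cos(k t)). *)
Fixpoint cheb_pair {R : realType} (k : nat) : {poly R} * {poly R} :=
  match k with
  | 0 => (1, 'X)
  | k'.+1 => let p := cheb_pair k' in (p.2, 2%:P * 'X * p.2 - p.1)
  end.
Definition cheb {R : realType} (k : nat) : {poly R} := (cheb_pair k).1.

Definition cheb_c {R : realType} (k l : nat) : R := (cheb k)`_l.

Definition cheb_ct {R : realType} (k l : nat) : R :=
  if odd (k - l) then cheb_c k.-1 l else cheb_c k l.

Definition sigma (R : realType) (k d : nat) : R :=
  @BH R d * \sum_(l < d.+1) `|@cheb_ct R k l|.

From Pilot Require Import Defs.
From HB Require Import structures.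
From mathcomp Require Import all_boot all_order all_algebra.
From mathcomp Require Import all_classical all_reals all_analysis.
From mathcomp Require Import ring lra zify.
Set Implicit Arguments. Unset Strict Implicit. Unset Printing Implicit Defensive.
Import Order.TTheory GRing.Theory Num.Theory.
Local Open Scope classical_set_scope.
Local Open Scope ring_scope.

(* Subtracting [g] changes neither the coefficients of degree at most [d] nor
   the distance, so it suffices to bound those of [h = f - g] by [|h|_oo].
   The l_2 bound is Parseval.  For the other one fix [x]: for [|t| <= 1],
   [p_x(t) = sum_S t^|S| h^(S) w_S(x)] averages [h] against the probability
   density [2^-n prod_i (1 + t x_i y_i)], so [|p_x| <= |h|_oo] on [[-1, 1]].
   As [p_x] has degree at most [k] and its [l]-th coefficient is the degree
   [l] part of [h] at [x], V. A. Markov's coefficient inequality gives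
   [|Rad_(<= d) h|_oo <= sum_(l <= d) |c~(k, l)| |h|_oo], and the
   Bohnenblust-Hille inequality for [Rad_(<= d) h] concludes.
   Markov's inequality follows by writing the part of [p] of the parity of
   [l] as [s^e P(s^2)] and interpolating [P] at the points [cos^2 (j pi / k)],
   where the corresponding part of [T_k] alternates in sign. *)

Section AlternatingInterpolation.
Variable R : realFieldType.

Lemma coef_prod_XsubC_sign (s : seq R) : all (fun r => 0 <= r) s ->
  forall l, 0 <= (-1) ^+ (size s + l) * (\prod_(r <- s) ('X - r%:P))`_l.
Proof.
elim: s => [_ l|r s IH /andP[r_ge0 s_ge0] l].
  by rewrite big_nil coef1; case: l => [|l]; rewrite ?mulr0 ?mulr1.
rewrite big_cons mulrBl coefB coefXM coefCM.
have IHs := IH s_ge0; case: l => [|l] /=.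
  have := IHs 0%N; rewrite !addn0 exprS; set q := _`_0; nra.
have := IHs l; have := IHs l.+1; rewrite !addnS !addSn !exprS.
set sg := (-1) ^+ (size s + l); set q1 := _`_l; set q2 := _`_l.+1; nra.
Qed.

Lemma prod_sign_below (m j : nat) : (j <= m)%N ->
  \prod_(k < m.+1 | k != j :> nat) (if (k < j)%N then -1 else 1) = (-1) ^+ j :> R.
Proof.
move=> jm; rewrite (big_mkcond (fun k : 'I_m.+1 => k != j :> nat)) /=.
rewrite (eq_bigr (fun k : 'I_m.+1 => if (k < j)%N then -1 else 1)) => [|k _]; last first.
  by case: eqP => [->|]; rewrite ?ltnn.
rewrite -(big_mkord xpredT (fun k => if (k < j)%N then -1 else 1)).
rewrite (big_cat_nat _ (n := j)) //= ?leqW //.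
rewrite (eq_big_nat _ _ (F2 := fun _ => -1)) => [|k /andP[_ ->] //].
rewrite [X in _ * X](eq_big_nat _ _ (F2 := fun _ => 1)) => [|k /andP[jk _]]; last first.
  by rewrite ltnNge jk.
by rewrite big1_eq mulr1 prodr_const_nat subn0.
Qed.

Variables (m : nat) (x : nat -> R).
Hypothesis x_inj : injective x.
Hypothesis x_ge0 : forall j, (j <= m)%N -> 0 <= x j.
Hypothesis x_decr : forall j j', (j < j')%N -> (j' <= m)%N -> x j' < x j.

Let lambda (i : nat) (j : 'I_m.+1) : R := (tnth (m.+1.-lagrange x) j)`_i.

(* The [j]-th Lagrange polynomial is a product of [m] factors [X - x_k] with
   nonnegative roots, divided by its value at [x_j], whose sign is [(-1)^j]. *)
Lemma lagrange_coef_sign i (j : 'I_m.+1) : 0 <= (-1) ^+ (m + i) * ((-1) ^+ j * lambda i j).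
Proof.
have jm : (j <= m)%N by rewrite -ltnS.
rewrite /lambda lagrangeE //= coefCM.
set p := \prod_(k < m.+1 | k != j) _.
have num_sign : 0 <= (-1) ^+ (m + i) * p`_i.
  have -> : p = \prod_(r <- [seq x (val k) | k <- enum [pred k : 'I_m.+1 | k != j]])
                   ('X - r%:P).
    by rewrite big_map big_enum.
  have := @coef_prod_XsubC_sign [seq x (val k) | k <- enum [pred k : 'I_m.+1 | k != j]].
  rewrite size_map -cardE cardC1 card_ord /=; apply.
  by apply/allP => r /mapP[k _ ->]; rewrite x_ge0 // -ltnS.
have den_sign : 0 < (-1) ^+ j * p.[x j].
  rewrite /p horner_prod -(prod_sign_below jm) -big_split /=.
  apply: prodr_gt0 => k kj; rewrite hornerXsubC.
  have km : (k <= m)%N by rewrite -ltnS.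
  case: ltnP => [kltj|jlek]; first by rewrite mulN1r oppr_gt0 subr_lt0 x_decr.
  by rewrite mul1r subr_gt0 x_decr // ltn_neqAle jlek eq_sym kj.
rewrite [X in 0 <= X](_ : _ = (-1) ^+ (m + i) * p`_i * ((-1) ^+ j * p.[x j])^-1).
  by rewrite mulr_ge0 // invr_ge0 ltW.
by rewrite invfM -exprVn invrN1; ring.
Qed.

(* A [Q] alternating in sign at decreasing nonnegative nodes has all its
   interpolation terms [Q(x_j) * lambda_j] of the same sign, so [|Q_i|]
   is their total mass; [P], dominated by [M |Q|] at the nodes, can only
   have less. *)
Lemma coef_le_alternating (P Q : {poly R}) (M : R) i :
  (size P <= m.+1)%N -> (size Q <= m.+1)%N -> 0 <= M ->
  (forall j, (j <= m)%N -> `|P.[x j]| <= M * `|Q.[x j]|) ->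
  (forall j, (j <= m)%N -> 0 <= (-1) ^+ j * Q.[x j]) ->
  `|P`_i| <= M * `|Q`_i|.
Proof.
move=> sP sQ M_ge0 PQ Q_alt.
have coefE (q : {poly R}) : (size q <= m.+1)%N ->
    q`_i = \sum_(j < m.+1) q.[x j] * lambda i j.
  move=> sq; rewrite {1}(lagrange_gen (ltn0Sn m) x_inj sq) coef_sum.
  by apply: eq_bigr => j _; rewrite coefCM.
pose sg : R := (-1) ^+ (m + i).
have sg_norm (z : R) : `|sg * z| = `|z| by rewrite normrM normrX normrN1 expr1n mul1r.
have Q_terms (j : 'I_m.+1) : 0 <= sg * (Q.[x j] * lambda i j).
  have -> : sg * (Q.[x j] * lambda i j) =
      ((-1) ^+ j * Q.[x j]) * (sg * ((-1) ^+ j * lambda i j)).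
    by rewrite [RHS]mulrCA mulrACA -expr2 sqrr_sign mul1r.
  by rewrite mulr_ge0 ?Q_alt ?lagrange_coef_sign // -ltnS.
have normQ : `|Q`_i| = \sum_(j < m.+1) `|Q.[x j] * lambda i j|.
  rewrite -sg_norm coefE // mulr_sumr ger0_norm ?sumr_ge0 //.
  by apply: eq_bigr => j _; rewrite -sg_norm ger0_norm.
rewrite normQ coefE // mulr_sumr (le_trans (ler_norm_sum _ _ _)) // ler_sum // => j _.
by rewrite !normrM mulrA ler_wpM2r // PQ // -ltnS.
Qed.

End AlternatingInterpolation.

Section ParityPart.
Variable R : realFieldType.

Lemma sum_ord_pairs (F : nat -> R) (w : nat) :
  \sum_(j < w.*2) F j = \sum_(u < w) (F u.*2 + F u.*2.+1).
Proof.
elim: w => [|w IH]; first by rewrite !big_ord0.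
by rewrite doubleS !big_ord_recr /= IH addrA.
Qed.

(* [parity_poly e m q] is the polynomial [P] with [q_e(s) = s^e P(s^2)],
   where [q_e] is the part of [q] of parity [e], truncated at degree [e + 2m]. *)
Definition parity_poly (e : bool) (m : nat) (q : {poly R}) : {poly R} :=
  \poly_(u < m.+1) q`_(e + u.*2).

Lemma horner_parity_poly (e : bool) (m : nat) (q : {poly R}) (s : R) :
  (forall j, (e + m.*2 < j)%N -> odd j = e -> q`_j = 0) ->
  (q.[s] + (-1) ^+ e * q.[- s]) / 2 = s ^+ e * (parity_poly e m q).[s ^+ 2].
Proof.
move=> q_hi; pose w := (size q + m).+1.
have size_q : (size q <= w.*2)%N by rewrite /w -addnn; lia.
rewrite (horner_coef_wide s size_q) (horner_coef_wide (- s) size_q).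
rewrite mulr_sumr -big_split /=.
rewrite (sum_ord_pairs (fun i => q`_i * s ^+ i + (-1) ^+ e * (q`_i * (- s) ^+ i))).
rewrite mulr_suml horner_poly mulr_sumr.
rewrite (big_ord_widen w (fun u => s ^+ e * (q`_(e + u.*2) * (s ^+ 2) ^+ u)));
  last by rewrite /w; lia.
rewrite [RHS]big_mkcond /=.
apply: eq_bigr => u _.
rewrite !(exprNn s) -!(signr_odd _ u.*2.+1) -!(signr_odd _ u.*2) /= odd_double /=.
rewrite expr0 expr1 !mul1r -exprM mul2n exprS.
set z := s ^+ u.*2; set a := q`_u.*2; set b := q`_u.*2.+1.
case: ltnP => um; first by case: e q_hi => _; rewrite ?add0n ?add1n -/a -/b /=; field.
have q_eu : q`_(e + u.*2) = 0.
  by rewrite q_hi ?oddD ?odd_double ?addbF //; case: (e); lia.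
by case: e q_hi q_eu; rewrite ?add0n ?add1n -/a -/b /= => _ ->; field.
Qed.

Lemma parity_poly_bounded (e : bool) (m : nat) (q : {poly R}) (M s : R) :
  (forall j, (e + m.*2 < j)%N -> odd j = e -> q`_j = 0) ->
  (forall t, -1 <= t <= 1 -> `|q.[t]| <= M) -> -1 <= s <= 1 ->
  `|s ^+ e * (parity_poly e m q).[s ^+ 2]| <= M.
Proof.
move=> q_hi q_bd /andP[s_geN1 s_le1].
rewrite -horner_parity_poly // normrM normfV (@ger0_norm _ 2) // ler_pdivrMr //.
rewrite (le_trans (ler_normD _ _)) // normrM normrX normrN1 expr1n mul1r.
suff : `|q.[s]| <= M /\ `|q.[- s]| <= M by case; lra.
by split; apply: q_bd; apply/andP; split; lra.
Qed.

End ParityPart.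

Section Chebyshev.
Variable R : realType.

Lemma chebSS k : cheb k.+2 = 2%:P * 'X * cheb k.+1 - cheb k :> {poly R}.
Proof. by []. Qed.

Lemma size_cheb k : (size (cheb k : {poly R}) <= k.+1)%N.
Proof.
elim/ltn_ind: k => -[|[|k]] IH; first by rewrite size_poly1.
  by rewrite size_polyX.
have size_2X : (size (2%:P * 'X : {poly R})%R <= 2)%N.
  by rewrite mul_polyC (leq_trans (size_scale_leq _ _)) ?size_polyX.
rewrite chebSS (leq_trans (size_polyD _ _)) // geq_max size_polyN.
apply/andP; split; last by apply: leq_trans (IH k _) _; lia.
apply: leq_trans (size_polyMleq _ _) _.
by have := IH k.+1 (ltnSn _); lia.
Qed.

Lemma cheb_cos k (t : R) : (cheb k).[cos t] = cos (k%:R * t).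
Proof.
elim/ltn_ind: k => -[|[|k]] IH; first by rewrite hornerC mul0r cos0.
  by rewrite hornerX mul1r.
rewrite chebSS !hornerE IH // IH //.
have -> : k.+2%:R * t = k.+1%:R * t + t by rewrite -addn1 natrD mulrDl mul1r.
have -> : k%:R * t = k.+1%:R * t - t by rewrite -addn1 natrD mulrDl mul1r addrK.
by rewrite cosB cosD; ring.
Qed.

Lemma cheb_Ncos k (t : R) : (cheb k).[- cos t] = (-1) ^+ k * (cheb k).[cos t].
Proof.
by rewrite -cosDpi !cheb_cos mulrDr (mulr_natl pi) (alternatingn (@cosDpi R)).
Qed.

End Chebyshev.

Section ChebyshevNodes.
Variables (R : realType) (k : nat).

Definition cheb_angle (j : nat) : R := pi *+ j / k%:R.

(* The squares [cos^2 (j pi / k)], [j <= k/2], of the extremal points of [T_k]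
   in [[0, 1]]; the values beyond [k/2] only make the map injective, as
   required by [lagrange]. *)
Definition cheb_sqnode (j : nat) : R :=
  if (j <= k./2)%N then cos (cheb_angle j) ^+ 2 else - j%:R.

Lemma cheb_angle_ge0 j : 0 <= cheb_angle j.
Proof. by apply: divr_ge0; [apply: mulrn_wge0; exact: pi_ge0 | exact: ler0n]. Qed.

Lemma cheb_angle_le_pihalf j : (j <= k./2)%N -> cheb_angle j <= pi / 2.
Proof.
move=> jk; rewrite /cheb_angle; have [->|k_gt0] := posnP k.
  by rewrite invr0 mulr0 divr_ge0 // pi_ge0.
have jk2 : 2 * j%:R <= k%:R :> R by rewrite -natrM ler_nat mul2n; lia.
have pi_ge0 : 0 <= pi :> R := pi_ge0 R.
by rewrite ler_pdivrMr ?ltr0n // -mulr_natr; nra.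
Qed.

Lemma cos_cheb_angle_ge0 j : (j <= k./2)%N -> 0 <= cos (cheb_angle j).
Proof.
move=> jk; apply: cos_ge0_pihalf; rewrite cheb_angle_le_pihalf // andbT.
by rewrite (le_trans _ (cheb_angle_ge0 j)) // oppr_le0 divr_ge0 ?pi_ge0.
Qed.

Lemma cheb_cos_angle j : (j <= k./2)%N -> (cheb k).[cos (cheb_angle j)] = (-1) ^+ j.
Proof.
move=> jk; rewrite cheb_cos /cheb_angle; have [k0|k_gt0] := posnP k.
  by move: jk; rewrite k0 leqn0 => /eqP->; rewrite mul0r cos0 expr0.
rewrite mulrCA mulfV ?pnatr_eq0 -?lt0n // mulr1.
by rewrite -[pi *+ j]add0r alternatingn ?cos0 ?mulr1 //; exact: cosDpi.
Qed.

Lemma cheb_sqnode_ge0 j : (j <= k./2)%N -> 0 <= cheb_sqnode j.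
Proof. by move=> jk; rewrite /cheb_sqnode jk sqr_ge0. Qed.

Lemma cheb_sqnode_decr j j' :
  (j < j')%N -> (j' <= k./2)%N -> cheb_sqnode j' < cheb_sqnode j.
Proof.
move=> jj' j'k; have jk : (j <= k./2)%N by lia.
have k_gt0 : (0 < k)%N by lia.
have pi_gt0 : 0 < pi :> R := pi_gt0 R.
have angle_lt : cheb_angle j < cheb_angle j'.
  by rewrite ltr_pM2r ?invr_gt0 ?ltr0n // -!(mulr_natr pi) ltr_pM2l // ltr_nat.
have in_0pi i : (i <= k./2)%N -> cheb_angle i \in `[0, pi].
  move=> ik; rewrite in_itv /= cheb_angle_ge0 (le_trans (cheb_angle_le_pihalf ik)) //.
  by rewrite ler_pdivrMr // ler_peMr // ?ler1n // ltW.
have cos_lt : cos (cheb_angle j') < cos (cheb_angle j) by rewrite ltr_cos ?in_0pi.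
by rewrite /cheb_sqnode jk j'k ltrXn2r // cos_cheb_angle_ge0.
Qed.

Lemma cheb_sqnode_inj : injective cheb_sqnode.
Proof.
have sqnode_lt0 j : (k./2 < j)%N -> cheb_sqnode j < 0.
  by move=> kj; rewrite /cheb_sqnode leqNgt kj oppr_lt0 ltr0n; lia.
move=> j j'; case: (leqP j k./2) => jk; case: (leqP j' k./2) => j'k e.
- case: (ltngtP j j') => // jj'.
    by have := cheb_sqnode_decr jj' j'k; rewrite e ltxx.
  by have := cheb_sqnode_decr jj' jk; rewrite e ltxx.
- by have := cheb_sqnode_ge0 jk; rewrite e leNgt sqnode_lt0.
- by have := cheb_sqnode_ge0 j'k; rewrite -e leNgt sqnode_lt0.
- move: e; rewrite /cheb_sqnode leqNgt jk leqNgt j'k /= => /oppr_inj/eqP.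
  by rewrite eqr_nat => /eqP.
Qed.

Lemma parity_cheb_sqnode j : (j <= k./2)%N ->
  cos (cheb_angle j) ^+ odd k * (parity_poly (odd k) k./2 (cheb k)).[cheb_sqnode j]
  = (-1) ^+ j.
Proof.
move=> jk; rewrite /cheb_sqnode jk -horner_parity_poly; last first.
  by rewrite odd_double_half => i ki _; apply/(leq_sizeP _ _ (size_cheb R k)).
rewrite cheb_Ncos cheb_cos_angle // mulrA -[X in _ * X * _]signr_odd -expr2 sqrr_sign mul1r.
by field.
Qed.

End ChebyshevNodes.

Section Markov.
Variable R : realType.

Lemma markov_same_parity (p : {poly R}) (k l : nat) (M : R) :
  (forall j, (k < j)%N -> odd j = odd k -> p`_j = 0) ->
  (l <= k)%N -> odd l = odd k ->
  (forall t, -1 <= t <= 1 -> `|p.[t]| <= M) ->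
  `|p`_l| <= M * `|(cheb k)`_l|.
Proof.
move=> p_hi lk lk_par p_bd.
have M_ge0 : 0 <= M by rewrite (le_trans _ (p_bd 0 _)) // lerN10 /=.
have p_hi' : forall j, (odd k + (k./2).*2 < j)%N -> odd j = odd k -> p`_j = 0.
  by rewrite odd_double_half.
pose P := parity_poly (odd k) k./2 p.
pose Q := parity_poly (odd k) k./2 (cheb k : {poly R}).
pose c j := cos (cheb_angle R k j) ^+ odd k.
have c_ge0 j : (j <= k./2)%N -> 0 <= c j.
  by move=> jk; rewrite exprn_ge0 ?cos_cheb_angle_ge0.
have cQ_node j : (j <= k./2)%N -> c j * Q.[cheb_sqnode R k j] = (-1) ^+ j.
  exact: parity_cheb_sqnode.
have cP_node j : (j <= k./2)%N -> `|c j * P.[cheb_sqnode R k j]| <= M.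
  move=> jk; rewrite /cheb_sqnode jk parity_poly_bounded //.
  by rewrite cos_geN1 cos_le1.
have cQ_norm j : (j <= k./2)%N -> c j * `|Q.[cheb_sqnode R k j]| = 1.
  by move=> jk; rewrite -(ger0_norm (c_ge0 j jk)) -normrM cQ_node // normrX normrN1 expr1n.
have Q_alt j : (j <= k./2)%N -> 0 <= (-1) ^+ j * Q.[cheb_sqnode R k j].
  by move=> jk; rewrite -(cQ_node j jk) -mulrA -expr2 mulr_ge0 ?c_ge0 ?sqr_ge0.
have PQ j : (j <= k./2)%N -> `|P.[cheb_sqnode R k j]| <= M * `|Q.[cheb_sqnode R k j]|.
  move=> jk; rewrite -[X in X <= _]mulr1 -(cQ_norm j jk) mulrCA mulrA.
  by rewrite -(ger0_norm (c_ge0 j jk)) -normrM ler_wpM2r ?cP_node.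
have := coef_le_alternating (@cheb_sqnode_inj R k) (@cheb_sqnode_ge0 R k)
  (@cheb_sqnode_decr R k) (l./2) (size_poly _ _) (size_poly _ _) M_ge0 PQ Q_alt.
have l2k2 : (l./2 < k./2.+1)%N by rewrite ltnS half_leq.
by rewrite !coef_poly l2k2 -lk_par odd_double_half.
Qed.

Lemma markov_coef_bound (p : {poly R}) (k l : nat) (M : R) :
  (size p <= k.+1)%N -> (l <= k)%N ->
  (forall t, -1 <= t <= 1 -> `|p.[t]| <= M) ->
  `|p`_l| <= M * `|cheb_ct k l|.
Proof.
move=> size_p lk p_bd; have p_hi j : (k < j)%N -> p`_j = 0 by move/(leq_sizeP _ _ size_p).
rewrite /cheb_ct /cheb_c; case: ifP => kl_odd; apply: markov_same_parity => //; try lia.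
- by move=> j kj jk_par; apply: p_hi; lia.
- by move=> j kj _; apply: p_hi.
Qed.

End Markov.

Section WalshExpansion.
Variables (R : realType) (n : nat).
Implicit Types (x y : cube n) (S T : {set 'I_n}) (f g h : cube n -> R).

Lemma sum_cube_prod (F : 'I_n -> bool -> R) :
  \sum_(x : cube n) \prod_i F i (x i) = \prod_i (F i true + F i false).
Proof.
rewrite -(bigA_distr_bigA (R := R) (times := GRing.mul) (plus := GRing.add)).
by apply: eq_bigr => i _; rewrite big_bool.
Qed.

Lemma walshE S x : walsh S x = \prod_i (if i \in S then Defs.coord x i else 1) :> R.
Proof. by rewrite /walsh big_mkcond. Qed.

Lemma walsh_orth S T :
  \sum_(x : cube n) walsh S x * walsh T x = if S == T then 2 ^+ n else 0 :> R.
Proof.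
under eq_bigr => x _ do rewrite !walshE -big_split /=.
rewrite (sum_cube_prod (fun i b => (if i \in S then (if b then -1 else 1) else 1) *
    (if i \in T then (if b then -1 else 1) else 1))).
case: eqP => [<-|neST].
  rewrite (eq_bigr (fun _ => 2)) ?prodr_const ?card_ord // => i _.
  by case: (i \in S); rewrite ?mulrNN !mulr1.
have [i|ST] := pickP (fun i => (i \in S) != (i \in T)); last first.
  by case: neST; apply/setP => i; apply/eqP/negbFE/ST.
rewrite (bigD1 i) //=; case: (i \in S); case: (i \in T) => //= _;
  by rewrite ?mulr1 ?mul1r addrC subrr mul0r.
Qed.

Lemma sum_walsh_weighted (t : R) x y :
  \sum_(S : {set 'I_n}) t ^+ #|S| * (walsh S x * walsh S y) =
  \prod_i (1 + t * (Defs.coord x i * Defs.coord y i)).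
Proof.
under [RHS]eq_bigr => i _ do rewrite addrC.
rewrite (@bigA_distr _ _ _ _ _ _
  (fun i => t * (Defs.coord x i * Defs.coord y i)) (fun _ => 1)).
by apply: eq_bigr => S _; rewrite -big_mkcond /= !big_split /= prodr_const.
Qed.

Lemma sum_walsh_dual x y :
  \sum_(S : {set 'I_n}) walsh S x * walsh S y = if x == y then 2 ^+ n else 0 :> R.
Proof.
rewrite (eq_bigr (fun S => 1 ^+ #|S| * (walsh S x * walsh S y))) => [|S _]; last first.
  by rewrite expr1n mul1r.
rewrite sum_walsh_weighted; under eq_bigr => i _ do rewrite mul1r.
case: eqP => [<-|ne_xy].
  rewrite (eq_bigr (fun _ => 2)) ?prodr_const ?card_ord // => i _.
  by rewrite /Defs.coord; case: (x i); rewrite ?mulrNN mulr1.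
have [i|xy] := pickP (fun i => x i != y i); last first.
  by case: ne_xy; apply/ffunP => i; apply/eqP/negbFE/xy.
rewrite (bigD1 i) //= /Defs.coord; case: (x i); case: (y i) => //= _;
  by rewrite ?mulr1 ?mul1r ?mulN1r subrr mul0r.
Qed.

Lemma fhat0 S : fhat (fun _ : cube n => 0 : R) S = 0.
Proof. by rewrite /fhat big1 ?mulr0 // => x _; rewrite mul0r. Qed.

Lemma fhatB f g S : fhat (fun x => f x - g x) S = fhat f S - fhat g S.
Proof.
by rewrite /fhat -mulrBr -sumrB; congr (_ * _); apply: eq_bigr => x _; rewrite mulrBl.
Qed.

Lemma parseval h :
  \sum_(S : {set 'I_n}) fhat h S ^+ 2 = (2 ^+ n)^-1 * \sum_(x : cube n) h x ^+ 2.
Proof.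
have two_n : (2 ^+ n : R) != 0 by rewrite expf_neq0 // pnatr_eq0.
have fhat_sq S : fhat h S ^+ 2 = (2 ^+ n)^-1 ^+ 2 *
    \sum_(x : cube n) \sum_(y : cube n) h x * h y * (walsh S x * walsh S y).
  rewrite /fhat exprMn; congr (_ * _); rewrite expr2 big_distrl /=.
  by apply: eq_bigr => x _; rewrite big_distrr /=; apply: eq_bigr => y _; ring.
under eq_bigr => S _ do rewrite fhat_sq.
rewrite -mulr_sumr exchange_big /=.
under eq_bigr => x _ do rewrite exchange_big /=.
under eq_bigr => x _ do under eq_bigr => y _ do rewrite -mulr_sumr sum_walsh_dual.
have diag x :
    \sum_(y : cube n) h x * h y * (if x == y then 2 ^+ n else 0) = h x ^+ 2 * 2 ^+ n.
  rewrite (bigD1 x) //= eqxx big1 ?addr0 ?expr2 // => y /negPf.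
  by rewrite eq_sym => ->; rewrite mulr0.
under eq_bigr => x _ do rewrite diag.
by rewrite -mulr_suml expr2; field.
Qed.

End WalshExpansion.

Section NoiseBound.
Variables (R : realType) (n : nat).
Implicit Types (x y : cube n) (S T : {set 'I_n}) (f g h : cube n -> R).

Lemma supnorm_ge0 f : 0 <= supnorm f.
Proof. by rewrite /supnorm; elim/big_ind: _ => // a b a_ge0; rewrite le_max a_ge0. Qed.

Lemma normr_le_supnorm f x : `|f x| <= supnorm f.
Proof. by rewrite /supnorm (bigD1 x) //= le_max lexx. Qed.

Lemma supnorm_le f (B : R) : 0 <= B -> (forall x, `|f x| <= B) -> supnorm f <= B.
Proof.
by move=> B_ge0 fB; rewrite /supnorm; elim/big_ind: _ => // a b; rewrite ge_max => ->.
Qed.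

Lemma noise_le_supnorm h x (t : R) : `|t| <= 1 ->
  `|\sum_(S : {set 'I_n}) fhat h S * t ^+ #|S| * walsh S x| <= supnorm h.
Proof.
move=> t_le1; pose K y := \prod_i (1 + t * (Defs.coord x i * Defs.coord y i)).
have two_n_gt0 : 0 < (2 ^+ n : R) by rewrite exprn_gt0.
have noiseE : \sum_(S : {set 'I_n}) fhat h S * t ^+ #|S| * walsh S x =
    (2 ^+ n)^-1 * \sum_y h y * K y.
  rewrite /K; under [in RHS]eq_bigr => y _ do rewrite -sum_walsh_weighted mulr_sumr.
  rewrite exchange_big /= mulr_sumr; apply: eq_bigr => S _.
  by rewrite /fhat !mulr_sumr !big_distrl /=; apply: eq_bigr => y _; ring.
have K_ge0 y : 0 <= K y.
  apply: prodr_ge0 => i _; have : `|t * (Defs.coord x i * Defs.coord y i)| <= 1.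
    by rewrite normrM /Defs.coord; case: (x i); case: (y i);
      rewrite ?mulrNN ?mulr1 ?mul1r ?mulN1r ?normrN normr1 mulr1.
  by rewrite ler_norml => /andP[]; lra.
have sum_K : \sum_y K y = 2 ^+ n.
  rewrite (sum_cube_prod (fun i b => 1 + t * (Defs.coord x i * (if b then -1 else 1)))).
  rewrite (eq_bigr (fun _ => 2)) ?prodr_const ?card_ord // => i _.
  by ring.
rewrite noiseE normrM normfV (ger0_norm (ltW two_n_gt0)) ler_pdivrMl //.
rewrite (le_trans (ler_norm_sum _ _ _)) // -sum_K mulr_suml ler_sum // => y _.
by rewrite normrM (ger0_norm (K_ge0 y)) [leRHS]mulrC ler_wpM2r ?normr_le_supnorm.
Qed.

End NoiseBound.

Section LowDegreePart.
Variables (R : realType) (n : nat).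
Implicit Types (x : cube n) (S T : {set 'I_n}) (f g h : cube n -> R).

Definition low_part (d : nat) h x : R :=
  \sum_(T : {set 'I_n} | (#|T| <= d)%N) fhat h T * walsh T x.

Lemma fhat_low_part d h S : fhat (low_part d h) S = if (#|S| <= d)%N then fhat h S else 0.
Proof.
have two_n : (2 ^+ n : R) != 0 by rewrite expf_neq0 // pnatr_eq0.
rewrite /fhat; under eq_bigr => x _ do rewrite big_distrl /=.
rewrite exchange_big /=.
under eq_bigr => T _ do rewrite -(eq_bigr _ (fun x _ => mulrA _ _ _)) -mulr_sumr walsh_orth.
case: leqP => Sd.
  rewrite (bigD1 S) //= eqxx big1 ?addr0 => [|T /andP[_ /negPf ->]]; last by rewrite mulr0.
  by rewrite mulrCA mulVf // mulr1.
rewrite big1 ?mulr0 // => T Td; case: eqP => [TS|]; last by rewrite mulr0.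
by move: Td; rewrite TS leqNgt Sd.
Qed.

Lemma sum_card_le (F : {set 'I_n} -> R) d :
  \sum_(S : {set 'I_n} | (#|S| <= d)%N) F S =
  \sum_(l < d.+1) \sum_(S : {set 'I_n} | #|S| == l) F S.
Proof.
rewrite (partition_big (fun S => inord #|S| : 'I_d.+1) xpredT) //=.
apply: eq_bigr => l _; apply: eq_bigl => S; case: leqP => [Sd|dS] /=.
  by rewrite -val_eqE /= inordK.
by rewrite gtn_eqF // (leq_ltn_trans _ dS) // -ltnS.
Qed.

Definition noise_poly h x : {poly R} :=
  \poly_(l < n.+1) \sum_(S : {set 'I_n} | #|S| == l) fhat h S * walsh S x.

Lemma horner_noise_poly h x (t : R) :
  (noise_poly h x).[t] = \sum_(S : {set 'I_n}) fhat h S * t ^+ #|S| * walsh S x.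
Proof.
rewrite horner_poly (eq_bigl (fun S : {set 'I_n} => #|S| <= n)%N) => [|S]; last first.
  by rewrite -[n in (_ <= n)%N]card_ord max_card.
rewrite sum_card_le; apply: eq_bigr => l _; rewrite big_distrl /=.
by apply: eq_bigr => S /eqP <-; rewrite mulrAC.
Qed.

Lemma size_noise_poly h x k : deg_le h k -> (size (noise_poly h x) <= k.+1)%N.
Proof.
move=> h_deg; apply/leq_sizeP => j kj; rewrite coef_poly; case: ifP => // _.
by rewrite big1 // => S /eqP Sj; rewrite h_deg ?mul0r // Sj.
Qed.

Lemma low_part_noise_poly d h x :
  (d <= n)%N -> low_part d h x = \sum_(l < d.+1) (noise_poly h x)`_l.
Proof.
move=> dn; rewrite /low_part sum_card_le; apply: eq_bigr => l _.
by rewrite coef_poly ifT // (leq_trans (ltn_ord l)).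
Qed.

Lemma supnorm_low_part_le d k h : (d <= k)%N -> (k <= n)%N -> deg_le h k ->
  supnorm (low_part d h) <= (\sum_(l < d.+1) `|cheb_ct k l|) * supnorm h.
Proof.
move=> dk kn h_deg; apply: supnorm_le => [|x].
  by rewrite mulr_ge0 ?sumr_ge0 ?supnorm_ge0.
rewrite low_part_noise_poly ?(leq_trans dk) // mulr_suml (le_trans (ler_norm_sum _ _ _)) //.
apply: ler_sum => l _; rewrite mulrC markov_coef_bound ?size_noise_poly //.
  by rewrite (leq_trans _ dk) // -ltnS.
by move=> t t_le1; rewrite horner_noise_poly noise_le_supnorm // ler_norml.
Qed.

Lemma l2_low_le_supnorm h d : l2_low h d <= supnorm h.
Proof.
rewrite /l2_low -(ger0_norm (supnorm_ge0 h)) -sqrtr_sqr ler_sqrt ?sqr_ge0 //.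
apply: (@le_trans _ _ (\sum_(S : {set 'I_n}) fhat h S ^+ 2)).
  rewrite [leRHS](bigID (fun S : {set 'I_n} => #|S| <= d)%N) /= lerDl.
  by rewrite sumr_ge0 // => S _; exact: sqr_ge0.
rewrite parseval ler_pdivrMl ?exprn_gt0 //.
have -> : 2 ^+ n * supnorm h ^+ 2 = \sum_(x : cube n) supnorm h ^+ 2.
  by rewrite sumr_const card_ffun card_bool card_ord -[in RHS]mulr_natl natrX.
apply: ler_sum => x _; rewrite -real_normK ?num_real // ler_sqr ?nnegrE ?supnorm_ge0 //.
exact: normr_le_supnorm.
Qed.

Lemma eq_l2_low f g d : (forall S, (#|S| <= d)%N -> fhat f S = fhat g S) ->
  l2_low f d = l2_low g d.
Proof. by move=> fg; rewrite /l2_low; congr Num.sqrt; apply: eq_bigr => S /fg ->. Qed.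

Lemma eq_lp_low (p : R) f g d : (forall S, (#|S| <= d)%N -> fhat f S = fhat g S) ->
  lp_low p f d = lp_low p g d.
Proof. by move=> fg; rewrite /lp_low; congr (_ `^ _); apply: eq_bigr => S /fg ->. Qed.

Lemma lp_low_le_BH d h : (d <= n)%N -> deg_le h d -> @BH_consts R d !=set0 ->
  lp_low (bh_exp d) h d <= @BH R d * supnorm h.
Proof.
move=> dn h_deg [B BB]; set L := lp_low _ h d.
have L_le B' : @BH_consts R d B' -> L <= B' * supnorm h by move/(_ n dn h h_deg).
have := supnorm_ge0 h; rewrite le_eqVlt => /orP[/eqP h0|h_gt0].
  by rewrite -h0 mulr0 (le_trans (L_le B BB)) // -h0 mulr0.
rewrite -ler_pdivrMr //; apply: lb_le_inf; first by exists B.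
by move=> B' /L_le; rewrite ler_pdivrMr.
Qed.

End LowDegreePart.

Lemma BH_consts_nonempty (R : realType) d : @BH R d != 0 -> @BH_consts R d !=set0.
Proof.
move=> BH_neq0; apply/set0P; apply: contraNneq BH_neq0 => consts0.
by rewrite /BH consts0 inf0.
Qed.

Theorem lemma2p2 (R : realType) (n k d : nat) :
  (0 < d)%N -> (d <= k)%N -> (k <= n)%N ->
  forall f : cube n -> R, deg_le f k ->
  Num.max (l2_low f d) ((@sigma R k d)^-1 * lp_low (bh_exp d) f d)
  <= inf [set supnorm (fun x => f x - g x) |
            g in [set g : cube n -> R | high_deg g d /\ deg_le g k]].
Proof.
move=> _ dk kn f f_deg; apply: lb_le_inf.
  by exists (supnorm (fun x => f x - 0)), (fun _ => 0) => //; split=> S _; exact: fhat0.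
move=> _ [g [g_high g_deg] <-]; set h := fun x => f x - g x.
have fh_low (S : {set 'I_n}) : (#|S| <= d)%N -> fhat f S = fhat h S.
  by move=> Sd; rewrite fhatB g_high ?subr0.
have h_deg : deg_le h k by move=> S kS; rewrite fhatB f_deg ?g_deg ?subr0.
have fpart_low (S : {set 'I_n}) : (#|S| <= d)%N -> fhat f S = fhat (low_part d h) S.
  by move=> Sd; rewrite fhat_low_part Sd fh_low.
rewrite ge_max (eq_l2_low fh_low) l2_low_le_supnorm /= (eq_lp_low _ fpart_low).
(* [B_d] is an infimum, so [sigma = 0] if no Bohnenblust-Hille constant exists. *)
have [sigma_le0|sigma_gt0] := lerP (@sigma R k d) 0.
  rewrite (le_trans _ (supnorm_ge0 h)) // mulr_le0_ge0 ?invr_le0 //.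
  exact: powR_ge0.
have C_ge0 : 0 <= \sum_(l < d.+1) `|@cheb_ct R k l| by rewrite sumr_ge0.
have BH_gt0 : 0 < @BH R d by move: sigma_gt0; rewrite /sigma; nra.
rewrite mulrC ler_pdivrMr // (le_trans (lp_low_le_BH _ _ _)) ?(leq_trans dk) //.
- by move=> S dS; rewrite fhat_low_part leqNgt dS.
- by apply: BH_consts_nonempty; rewrite gt_eqF.
- by rewrite /sigma [leRHS]mulrCA ler_pM2l // [leRHS]mulrC supnorm_low_part_le.
Qed.
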